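(* Let $\varepsilon(n,k)=e(n,k)+q\,o(n,k)$ and $\lambda(n,k)=L(n,k)+q\bar L(n,k)$ in $\mathbb{Z}[q]$. Then $\varepsilon(n,0)=\lambda(n,0)=1$ for all $n\ge0$, $\varepsilon(0,k)=\lambda(0,k)=0$ for $k>0$, and for all $n\ge1$, $k\ge1$, modulo $q^2-1$, $$\varepsilon(n,k)\equiv q^k\big(\varepsilon(n-1,k)+\varepsilon(n-1,k-1)\big),\qquad \lambda(n,k)\equiv q^k\lambda(n-1,k)+\lambda(n-1,k-1).$$
   Context: $e(n,k)$ (resp. $o(n,k)$) is the number of $k$-element subsets of $\{1,\dots,n\}$ with even (resp. odd) sum, the empty set counting as even. Losanitsch's triangle $(L(n,k))$ is defined by $L(0,k)=[k=0]$, $L(1,k)=[k\le 1]$ for $k\ge0$, $L(n,k)=0$ for $k<0$, and for $n\ge 2$: $L(n,k)=L(n-2,k)+\binom{n-2}{k-1}+L(n-2,k-2)$ (with $\binom{m}{j}=0$ for $j<0$ or $j>m$); $\bar L(n,k)=\binom nk-L(n,k)$. *)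

From HB Require Import structures.
From mathcomp Require Import all_boot all_order all_algebra.
Set Implicit Arguments. Unset Strict Implicit. Unset Printing Implicit Defensive.
Import GRing.Theory.
Local Open Scope ring_scope.

(* {1,...,n} is represented by 'I_n, element i standing for i+1. *)
Definition subset_sum (n : nat) (A : {set 'I_n}) : nat :=
  (\sum_(i in A) (i.+1 : nat))%N.

Definition e_cnt (n k : nat) : nat :=
  #|[set A : {set 'I_n} | (#|A| == k) && ~~ odd (subset_sum A)]|.
Definition o_cnt (n k : nat) : nat :=
  #|[set A : {set 'I_n} | (#|A| == k) && odd (subset_sum A)]|.

(* Losanitsch's triangle; k is a nat, so k<0 cases are the 'else 0' branches. *)
Fixpoint L (n k : nat) {struct n} : nat :=
  match n with
  | 0 => (k == 0%N : nat)
  | 1 => (k <= 1)%N : nat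
  | m.+2 => (L m k + (if k is k'.+1 then 'C(m, k') else 0)
             + (if k is k''.+2 then L m k'' else 0))%N
  end.

(* Lbar(n,k) = C(n,k) - L(n,k), taken in int (no truncation). *)
Definition Lbar (n k : nat) : int := ('C(n, k))%:Z - (L n k)%:Z.

Definition eps (n k : nat) : {poly int} :=
  (e_cnt n k)%:R + (o_cnt n k)%:R * 'X.
Definition lam (n k : nat) : {poly int} :=
  (L n k)%:R + (Lbar n k)%:P * 'X.

Definition congr_q2 (p r : {poly int}) : Prop :=
  exists c : {poly int}, p - r = c * ('X^2 - 1).

(* At q = 1 both eps(n,k) and lam(n,k) evaluate to C(n,k), so there the
   recurrences are Pascal's rule.  At q = -1, eps(n,k) becomes the signed count
   of k-subsets A of {1..n} weighted by (-1)^(sum A); splitting off the element 1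
   and shifting the remaining elements down by one multiplies the weight by
   (-1)^|A|, which gives the first recurrence.  lam(n,k) becomes 2L(n,k) - C(n,k),
   the number of k-subsets invariant under reversal, which has a closed form
   satisfying the second recurrence.  Since q^2 - 1 = (q - 1)(q + 1), agreement
   at q = 1 and q = -1 is exactly congruence modulo q^2 - 1. *)

From HB Require Import structures.
From mathcomp Require Import all_boot all_order all_algebra.
From mathcomp Require Import ring zify.
Import GRing.Theory.
Local Open Scope ring_scope.

(* The number of k-subsets of {1..n} fixed by i |-> n + 1 - i. *)
Definition Lpal (n k : nat) : nat :=
  if odd n || ~~ odd k then 'C(n./2, k./2) else 0.

Lemma L_n0 n : L n 0 = 1%N.
Proof. by elim/ltn_ind: n => [[|[|n]]] //= IH; rewrite IH ?addn0 // ltnS leqnSn. Qed.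

Lemma LpalSS n k : Lpal n.+2 k.+2 = (Lpal n k.+2 + Lpal n k)%N.
Proof. by rewrite /Lpal /= negbK; case: (odd n); case: (odd k); rewrite //= binS. Qed.

Lemma L_double n k : (2 * L n k = 'C(n, k) + Lpal n k)%N.
Proof.
elim/ltn_ind: n k => [[|[|n]]] IH k.
- by case: k => [|[|k]] //; rewrite /Lpal /= negbK; case: (odd k); rewrite //= bin0n.
- by case: k => [|[|k]].
- have IHn := IH n (leqW (leqnn _)).
  case: k => [|[|k]].
  + by rewrite /= L_n0 /Lpal /= !bin0 orbT.
  + have := IHn 1%N; rewrite /= !bin1 /Lpal /= negbK !bin0 orbF.
    by case: (odd n) => /=; lia.
  + by have := IHn k.+2; have := IHn k; rewrite /= LpalSS !binS; lia.
Qed.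

Lemma Lpal_rec n k :
  (Lpal n.+1 k.+1)%:R = (-1) ^+ k.+1 * (Lpal n k.+1)%:R + (Lpal n k)%:R :> int.
Proof.
rewrite /Lpal -signr_odd /= !negbK !uphalf_half.
by case: (odd n); case: (odd k); rewrite /= ?binS ?natrD; ring.
Qed.

Definition sgn_sum n k : int :=
  \sum_(A : {set 'I_n} | #|A| == k) (-1) ^+ subset_sum A.

Lemma e_cnt_add_o_cnt n k : (e_cnt n k + o_cnt n k)%N = 'C(n, k).
Proof.
rewrite -[in RHS](card_ord n) -card_draws addnC.
rewrite -(cardsID [set A : {set 'I_n} | odd (subset_sum A)]).
by congr (_ + _)%N; apply: eq_card => A; rewrite !inE andbC.
Qed.

Lemma e_cnt_sub_o_cnt n k : (e_cnt n k)%:R - (o_cnt n k)%:R = sgn_sum n k.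
Proof.
rewrite /sgn_sum (bigID (fun A : {set 'I_n} => odd (subset_sum A))) /= addrC.
rewrite (eq_bigr (fun _ => 1)) => [|A /andP[_ /negbTE even_A]]; last first.
  by rewrite -signr_odd even_A.
rewrite [X in _ = _ + X](eq_bigr (fun _ => -1)) => [|A /andP[_ odd_A]]; last first.
  by rewrite -signr_odd odd_A.
by rewrite !sumr_const -mulNrn /e_cnt /o_cnt !cardsE.
Qed.

Section ShiftSubsets.
Variable n : nat.
Implicit Types (B : {set 'I_n}) (A : {set 'I_n.+1}).

Definition shift B : {set 'I_n.+1} := lift ord0 @: B.

Lemma ord0_shiftF B : (ord0 \in shift B) = false.
Proof. by apply/negbTE/imsetP => -[j _ /eqP]; rewrite (negbTE (neq_lift _ _)). Qed.

Lemma mem_shift B j : (lift ord0 j \in shift B) = (j \in B).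
Proof. exact/mem_imset/lift_inj. Qed.

Lemma card_shift B : #|shift B| = #|B|.
Proof. exact/card_imset/lift_inj. Qed.

Lemma card_shiftU0 B : #|ord0 |: shift B| = #|B|.+1.
Proof. by rewrite cardsU1 ord0_shiftF card_shift. Qed.

Lemma subset_sum_shift B : subset_sum (shift B) = (subset_sum B + #|B|)%N.
Proof.
rewrite /subset_sum big_imset /=; last by move=> i j _ _; apply: lift_inj.
by rewrite -sum1_card -big_split; apply: eq_bigr => j _; rewrite /= addn1.
Qed.

Lemma subset_sum_shiftU0 B :
  subset_sum (ord0 |: shift B) = (subset_sum B + #|B|).+1.
Proof.
by rewrite /subset_sum big_setU1 ?ord0_shiftF //= -/(subset_sum _) subset_sum_shift.
Qed.

Definition split0 A : bool * {set 'I_n} := (ord0 \in A, [set j | lift ord0 j \in A]).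
Definition join0 (bB : bool * {set 'I_n}) : {set 'I_n.+1} :=
  if bB.1 then ord0 |: shift bB.2 else shift bB.2.

Lemma split0K : cancel split0 join0.
Proof.
move=> A; apply/setP => i; rewrite /join0 /=.
have [j ->|->] := unliftP ord0 i.
  by case: (ord0 \in A); rewrite ?inE mem_shift inE.
by case: (boolP (ord0 \in A)) => A0; rewrite ?inE ?eqxx ?ord0_shiftF ?(negbTE A0).
Qed.

Lemma join0K : cancel join0 split0.
Proof.
move=> [[] B]; rewrite /join0 /split0 /=; congr (_, _).
- by rewrite !inE eqxx.
- by apply/setP => j; rewrite !inE eq_sym (negbTE (neq_lift _ _)) mem_shift.
- by rewrite ord0_shiftF.
- by apply/setP => j; rewrite !inE mem_shift.
Qed.

Lemma sum_subsetsS (R : nmodType) (F : {set 'I_n.+1} -> R) :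
  \sum_A F A = \sum_B (F (ord0 |: shift B) + F (shift B)).
Proof.
rewrite (reindex join0); last by exists split0 => bB _; [apply: join0K | apply: split0K].
by rewrite -(pair_big xpredT xpredT (fun b B => F (join0 (b, B)))) big_bool -big_split.
Qed.

End ShiftSubsets.

Lemma sgn_sumSS n k : sgn_sum n.+1 k.+1 = (-1) ^+ k.+1 * (sgn_sum n k.+1 + sgn_sum n k).
Proof.
rewrite /sgn_sum big_mkcond sum_subsetsS [X in _ * (X + _)]big_mkcond.
rewrite [X in _ * (_ + X)]big_mkcond -big_split mulr_sumr.
apply: eq_bigr => B _ /=.
rewrite card_shiftU0 card_shift subset_sum_shiftU0 subset_sum_shift eqSS.
have [->|_] := eqVneq #|B| k.
  by rewrite (ltn_eqF (ltnSn k)) !exprS exprD; ring.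
have [->|_] := eqVneq #|B| k.+1; last by rewrite mulr0.
by rewrite exprD; ring.
Qed.

Lemma congr_q2_eval (p r : {poly int}) :
  p.[1] = r.[1] -> p.[-1] = r.[-1] -> congr_q2 p r.
Proof.
move=> eq1 eqN1.
have /factor_theorem[c1 def_pr] : root (p - r) 1 by rewrite /root !hornerE eq1 subrr.
have /factor_theorem[c def_c1] : root c1 (-1).
  have : (p - r).[-1] = 0 by rewrite !hornerE eqN1 subrr.
  rewrite def_pr !hornerE => /eqP; rewrite mulf_eq0 => /orP[//|].
  by rewrite -opprD oppr_eq0.
by exists c; rewrite def_pr def_c1 polyCN polyC1; ring.
Qed.

Lemma horner_eps n k (x : int) : (eps n k).[x] = (e_cnt n k)%:R + (o_cnt n k)%:R * x.
Proof. by rewrite /eps !hornerE !hornerMn -polyC1 hornerC. Qed.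

Lemma horner_lam n k (x : int) : (lam n k).[x] = (L n k)%:R + Lbar n k * x.
Proof. by rewrite /lam !hornerE !hornerMn -polyC1 hornerC. Qed.

Lemma eps_horner1 n k : (eps n k).[1] = 'C(n, k)%:R.
Proof. by rewrite horner_eps mulr1 -natrD e_cnt_add_o_cnt. Qed.

Lemma eps_hornerN1 n k : (eps n k).[-1] = sgn_sum n k.
Proof. by rewrite horner_eps mulrN1 e_cnt_sub_o_cnt. Qed.

Lemma lam_horner1 n k : (lam n k).[1] = 'C(n, k)%:R.
Proof. by rewrite horner_lam mulr1 /Lbar; lia. Qed.

Lemma lam_hornerN1 n k : (lam n k).[-1] = (Lpal n k)%:R.
Proof.
have /(congr1 (fun m : nat => m%:R : int)) := L_double n k.
by rewrite horner_lam /Lbar natrM natrD mulrN1 opprB; lia.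
Qed.

Lemma o_cnt_n0 n : o_cnt n 0 = 0%N.
Proof.
apply/eqP; rewrite cards_eq0; apply/eqP/setP => A; rewrite !inE cards_eq0.
by case: eqP => // ->; rewrite /subset_sum big_set0.
Qed.

Lemma eps_n0 n : eps n 0 = 1.
Proof.
have := e_cnt_add_o_cnt n 0; rewrite o_cnt_n0 bin0 addn0 => e_n0.
by rewrite /eps e_n0 o_cnt_n0 mul0r addr0.
Qed.

Lemma lam_n0 n : lam n 0 = 1.
Proof. by rewrite /lam /Lbar L_n0 bin0 subrr polyC0 mul0r addr0. Qed.

Lemma eps_0k k : (0 < k)%N -> eps 0 k = 0.
Proof.
move=> k_gt0; have := e_cnt_add_o_cnt 0 k; rewrite bin0n (gtn_eqF k_gt0).
by move/eqP; rewrite addn_eq0 /eps => /andP[/eqP-> /eqP->]; rewrite mul0r addr0.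
Qed.

Lemma lam_0k k : (0 < k)%N -> lam 0 k = 0.
Proof. by case: k => // k _; rewrite /lam /Lbar bin0n subrr polyC0 mul0r addr0. Qed.

Theorem proposition4p3 :
  (forall n : nat, eps n 0 = 1 /\ lam n 0 = 1) /\
  (forall k : nat, (0 < k)%N -> eps 0 k = 0 /\ lam 0 k = 0) /\
  (forall n k : nat, (1 <= n)%N -> (1 <= k)%N ->
     congr_q2 (eps n k) ('X^k * (eps n.-1 k + eps n.-1 k.-1)) /\
     congr_q2 (lam n k) ('X^k * lam n.-1 k + lam n.-1 k.-1)).
Proof.
split; [move=> n | split; [move=> k k_gt0 | move=> [//|n] [//|k] _ _]].
- by rewrite eps_n0 lam_n0.
- by rewrite eps_0k ?lam_0k.
rewrite !succnK; split; apply: congr_q2_eval.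
- by rewrite eps_horner1 hornerM hornerXn hornerD !eps_horner1 expr1n mul1r binS natrD.
- by rewrite eps_hornerN1 hornerM hornerXn hornerD !eps_hornerN1 sgn_sumSS.
- by rewrite lam_horner1 hornerD hornerM hornerXn !lam_horner1 expr1n mul1r binS natrD.
- by rewrite lam_hornerN1 hornerD hornerM hornerXn !lam_hornerN1 Lpal_rec.
Qed.
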